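(* For every $n\ge21$ and every integer $t$ with $\frac{n^2}{8}+\frac{n}{4}-\frac{11}{8}\le t\le \frac{n^2}{8}+\frac{n}{2}-2$, there exists an $(n,t)$-blocker.
   Context: For a convex $n$-gon: an edge is a segment between two vertices; diagonals are edges that are not sides of the polygon. Two edges cross if they share an interior point. A triangulation is a maximal set of pairwise non-crossing diagonals. A blocker is a set $B$ of diagonals having a diagonal in common with every triangulation; it is saturated if for every $e\in B$, $B\setminus\{e\}$ is not a blocker. An $(n,t)$-blocker is a saturated blocker of size $t$ for a convex $n$-gon. *)

(* A convex n-gon has vertices 0,1,...,n-1 ('I_n) in cyclic
   order. An edge is stored as an ordered pair (i, j) with i < j. *)
From mathcomp Require Import all_boot.
Set Implicit Arguments. Unset Strict Implicit. Unset Printing Implicit Defensive.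

Section Polygon.
Variable n : nat.

Definition is_side (e : 'I_n * 'I_n) : bool :=
  (e.1 < e.2) && ((e.2 == e.1.+1 :> nat) || ((e.1 == 0 :> nat) && (e.2 == n.-1 :> nat))).

Definition is_diagonal (e : 'I_n * 'I_n) : bool :=
  (e.1 < e.2) && ~~ is_side e.

(* two distinct edges of a convex polygon share an interior point iff
   their endpoints strictly interleave along the boundary *)
Definition cross (e f : 'I_n * 'I_n) : bool :=
  ((e.1 < f.1) && (f.1 < e.2) && (e.2 < f.2)) ||
  ((f.1 < e.1) && (e.1 < f.2) && (f.2 < e.2)).

Definition diagonals : {set 'I_n * 'I_n} := [set e | is_diagonal e].

Definition noncrossing (S : {set 'I_n * 'I_n}) : bool :=
  [forall e in S, forall f in S, ~~ cross e f].

Definition triangulation (T : {set 'I_n * 'I_n}) : bool :=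
  [&& T \subset diagonals, noncrossing T &
      [forall S : {set 'I_n * 'I_n},
         ((S \subset diagonals) && noncrossing S && (T \subset S)) ==> (S == T)]].

Definition blocker (B : {set 'I_n * 'I_n}) : bool :=
  (B \subset diagonals) &&
  [forall T : {set 'I_n * 'I_n}, triangulation T ==> (B :&: T != set0)].

Definition saturated_blocker (B : {set 'I_n * 'I_n}) : bool :=
  blocker B && [forall e in B, ~~ blocker (B :\ e)].

Definition nt_blocker (t : nat) (B : {set 'I_n * 'I_n}) : bool :=
  saturated_blocker B && (#|B| == t).

End Polygon.

From mathcomp Require Import all_boot zify.
Set Implicit Arguments. Unset Strict Implicit. Unset Printing Implicit Defensive.

(* Cut the boundary 0, 1, ..., n-1 into consecutive arcs D, A, S, C of sizes
   d, a, s, c, and take all diagonals joining A to C or D to S.  In any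
   triangulation, walk from the side {0, n-1} through the triangles whose
   base joins D to C: the walk ends at a triangle with apex in A or S, and one
   of its other two sides joins A to C or D to S, so the set is a blocker.
   None of its diagonals e is redundant: e together with a fan inside e and a
   fan outside e, with centres chosen away from the set, is a triangulation
   meeting the set only in e.  Trading the corner {min A, n-1} for {min S, n-1}
   and the diagonals from min A into S \ {min S} keeps both properties and
   adds s - 1 to the size a c + d s.  With s = n/4 and c = s + 1 these sizes
   cover the whole window, except at its top end for n = 0 mod 4, which the
   plain family with d = 1, a = n/4, s = n/4 - 2 reaches. *)

Definition interleave (a b c d : nat) : bool :=
  ((a < c < b) && (b < d)) || ((c < a < d) && (d < b)).

Definition chord_inside (i j a b : nat) : bool := (i <= a) && (b <= j).
Definition chord_outside (i j a b : nat) : bool := [|| b <= i, j <= a | (a <= i) && (j <= b)].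

Lemma inside_fan_crossing i j h s t :
  i < h < j -> chord_inside i j s t -> s.+1 < t -> (s != i) || (t != j) -> s != h -> t != h ->
  exists a b, [/\ a.+1 < b, chord_inside i j a b, (a == h) || (b == h) & interleave a b s t].
Proof.
rewrite /chord_inside /interleave => ihj st_in st st_ne hs ht.
have [sht|nsht] := boolP (s < h < t).
  have [i_s|s_i] := ltnP i s; first by exists i, h; split; lia.
  by exists h, j; split; lia.
have [h_s|t_h] : h < s \/ t < h by lia.
  by exists h, s.+1; split; lia.
by exists s.+1, h; split; lia.
Qed.

Lemma outside_fan_crossing n i j h s t :
  j < n -> (h < i) || (j < h) -> h < n -> chord_outside i j s t -> s.+1 < t < n ->
  ~~ ((s == 0) && (t == n.-1)) -> (s != i) || (t != j) -> s != h -> t != h ->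
  exists a b, [/\ a.+1 < b < n, ~~ ((a == 0) && (b == n.-1)), chord_outside i j a b,
                  (a == h) || (b == h) & interleave a b s t].
Proof.
rewrite /chord_outside /interleave => jn hij hn st_out stn st0 st_ne hs ht.
have [sht|nsht] := boolP (s < h < t).
  have [s0|s_pos] := posnP s; first by exists h, n.-1; split; lia.
  by exists 0, h; split; lia.
have [h_s|t_h] : h < s \/ t < h by lia.
  have [apart|s_i] := boolP ((s < i) || (j <= s)); first by exists h, s.+1; split; lia.
  by exists h, t.-1; split; lia.
have [apart|s_i] := boolP ((s < i) || (j <= s)); first by exists s.+1, h; split; lia.
by exists t.-1, h; split; lia.
Qed.

Section Polygon.
Variable n : nat.
Local Notation edge := ('I_n * 'I_n)%type.

Lemma is_diagonalE (g : edge) :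
  is_diagonal g = (g.1.+1 < g.2) && ~~ ((g.1 == 0 :> nat) && (g.2 == n.-1 :> nat)).
Proof. by rewrite /is_diagonal /is_side; have := ltn_ord g.2; lia. Qed.

Lemma cross_sym (e f : edge) : cross e f = cross f e.
Proof. by rewrite /cross; lia. Qed.

Lemma noncrossingP (S : {set edge}) :
  reflect {in S &, forall e f, ~~ cross e f} (noncrossing S).
Proof.
apply: (iffP forallP) => [nc e f eS fS | nc e].
  by have /forallP/(_ f) := implyP (nc e) eS; rewrite fS.
by apply/implyP => eS; apply/forallP => f; apply/implyP; apply: nc.
Qed.

Lemma triangulationP (T : {set edge}) :
  reflect [/\ {in T, forall g, is_diagonal g}, {in T &, forall e f, ~~ cross e f} &
             forall g, is_diagonal g -> g \notin T -> exists2 f, f \in T & cross f g]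
          (triangulation T).
Proof.
apply: (iffP and3P) => [[/subsetP TD /noncrossingP nc /forallP max] | [TD nc max]].
  split=> [g /TD|//|g gD gT]; first by rewrite inE.
  have [/exists_inP //|no_cross] := boolP [exists f in T, cross f g].
  have ncU : noncrossing (g |: T).
    apply/noncrossingP => e f; rewrite !inE.
    case/predU1P => [->|eT]; case/predU1P => [->|fT]; last exact: nc.
    - by rewrite /cross; lia.
    - by rewrite cross_sym; apply: contra no_cross => c; apply/exists_inP; exists f.
    - by apply: contra no_cross => c; apply/exists_inP; exists e.
  have /eqP TgT : g |: T == T.
    have := max (g |: T); rewrite subsetU1 ncU !andbT => /implyP; apply.
    by apply/subsetP => x; rewrite !inE => /predU1P [->|/TD]; rewrite ?inE.
  by rewrite -TgT setU11 in gT.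
split; first by apply/subsetP => g /TD; rewrite inE.
  exact/noncrossingP.
apply/forallP => S; apply/implyP => /andP [/andP [/subsetP SD /noncrossingP ncS] TS].
rewrite eqEsubset TS andbT; apply/subsetP => g gS; apply: contraT => gT.
have gD : is_diagonal g by have := SD g gS; rewrite inE.
have [f fT fg] := max g gD gT.
by have := ncS f g (subsetP TS f fT) gS; rewrite fg.
Qed.

Definition polygon_edge (T : {set edge}) (u v : 'I_n) : bool := is_side (u, v) || ((u, v) \in T).

Lemma polygon_edge_noncross (T : {set edge}) u v (f : edge) :
  triangulation T -> polygon_edge T u v -> f \in T -> ~~ cross (u, v) f.
Proof.
case/triangulationP => _ nc _ /orP [uv|uvT] fT; last exact: nc.
by case: f {fT} => f1 f2; move: uv; rewrite /is_side /cross /=; have := ltn_ord f2; lia.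
Qed.

Lemma triangulation_apex (T : {set edge}) (u v : 'I_n) :
  triangulation T -> u.+1 < v -> polygon_edge T u v ->
  exists k : 'I_n, [/\ u < k < v, polygon_edge T u k & polygon_edge T k v].
Proof.
move=> Ttr uv uvT; have u1n : u.+1 < n by apply: ltn_trans uv _.
pose P (k : 'I_n) := (u < k < v) && polygon_edge T u k.
have P1 : P (Ordinal u1n) by rewrite /P /polygon_edge /is_side /=; lia.
have [k /andP [ukv ukT] kmax] := arg_maxnP val P1.
exists k; split=> //; apply: contraT => kvT.
(* Some f in T crosses the diagonal (k, v); since f crosses neither (u, v) nor
   (u, k), it is (u, f.2) with k < f.2 < v, against the maximality of k. *)
have kv : k.+1 < v by move: kvT; rewrite /polygon_edge /is_side /=; lia.
have kvD : is_diagonal (k, v) by rewrite is_diagonalE /=; lia.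
case/triangulationP: (Ttr) => _ _ /(_ _ kvD) max.
have [[f1 f2] fT] : exists2 f, f \in T & cross f (k, v).
  by apply: max; apply: contra kvT => kvT; rewrite /polygon_edge kvT orbT.
have := polygon_edge_noncross Ttr uvT fT; have := polygon_edge_noncross Ttr ukT fT.
rewrite /cross /= => nuk nuv kvf.
have /val_inj f1u : f1 = u :> nat by lia.
have /kmax : P f2 by rewrite /P /polygon_edge f1u in fT *; rewrite fT orbT; lia.
rewrite /=; lia.
Qed.

Lemma triangulation_triangle_across (T : {set edge}) (lo hi : nat) :
  triangulation T -> 0 < lo < hi -> hi < n ->
  exists i k j : 'I_n, [/\ i < lo <= k, k < hi <= j, polygon_edge T i k & polygon_edge T k j].
Proof.
move=> Ttr lohi hin.
suff descend d (i j : 'I_n) : j - i <= d -> i < lo -> hi <= j -> polygon_edge T i j ->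
    exists i k j : 'I_n, [/\ i < lo <= k, k < hi <= j, polygon_edge T i k & polygon_edge T k j].
  have n0 : 0 < n by lia.
  have n1 : n.-1 < n by lia.
  apply: (descend n (Ordinal n0) (Ordinal n1)) => //=; try lia.
  by rewrite /polygon_edge /is_side /=; apply/orP; left; lia.
elim: d i j => [|d IH] i j ji ilo hij ijT; first by lia.
have [k [ikj ikT kjT]] := triangulation_apex Ttr (ltac:(lia) : i.+1 < j) ijT.
have [klo|lok] := ltnP k lo; first by apply: (IH k j) => //; lia.
have [hik|khi] := leqP hi k; first by apply: (IH i k) => //; lia.
by exists i, k, j; split=> //; apply/andP.
Qed.

Definition double_fan_chord (i j h1 h2 a b : nat) : bool :=
  [|| (a == i) && (b == j),
      chord_inside i j a b && ((a == h1) || (b == h1)) |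
      chord_outside i j a b && ((a == h2) || (b == h2))].

Definition double_fan (i j h1 h2 : nat) : {set edge} :=
  [set g : edge | is_diagonal g && double_fan_chord i j h1 h2 g.1 g.2].

Lemma double_fan_triangulation i j h1 h2 :
  i.+1 < j < n -> ~~ ((i == 0) && (j == n.-1)) -> i < h1 < j -> (h2 < i) || (j < h2) -> h2 < n ->
  triangulation (double_fan i j h1 h2).
Proof.
move=> ijn ij0 h1ij h2ij h2n; apply/triangulationP; split.
- by move=> g; rewrite inE => /andP [].
- move=> [e1 e2] [f1 f2]; rewrite !inE /cross /double_fan_chord /chord_inside /chord_outside /=.
  by move=> /andP [_ e] /andP [_ f]; case/or3P: e; case/or3P: f; lia.
move=> [s t]; rewrite inE is_diagonalE /= => /andP [st st0]; rewrite st st0 /= => stF.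
have tn := ltn_ord t.
suff [a [b [ab bn ab0 abF abst]]] : exists a b, [/\ a.+1 < b, b < n,
    ~~ ((a == 0) && (b == n.-1)), double_fan_chord i j h1 h2 a b & interleave a b s t].
  have an : a < n by lia.
  by exists (Ordinal an, Ordinal bn); rewrite // inE is_diagonalE /= ab ab0 abF.
have [ijst|nijst] := boolP (interleave i j s t).
  by exists i, j; rewrite /double_fan_chord !eqxx; split; lia.
have sij : (s != i :> nat) || (t != j :> nat) by move: stF; rewrite /double_fan_chord; lia.
have [inner|outer] : chord_inside i j s t \/ chord_outside i j s t.
  by move: nijst; rewrite /interleave /chord_inside /chord_outside; lia.
  move: stF; rewrite /double_fan_chord inner /= => /norP [_ /norP [/norP [sh1 th1] _]].
  have [a [b [ab abij hab abst]]] := inside_fan_crossing h1ij inner st sij sh1 th1.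
  exists a, b; rewrite /double_fan_chord abij hab orbT.
  by split=> //; move: abij; rewrite /chord_inside; lia.
move: stF; rewrite /double_fan_chord outer /= => /norP [_ /norP [_ /norP [sh2 th2]]].
have stn : s.+1 < t < n by rewrite st tn.
have [a [b [/andP [ab bn] ab0 abij hab abst]]] :=
  outside_fan_crossing (ltac:(lia) : j < n) h2ij h2n outer stn st0 sij sh2 th2.
by exists a, b; rewrite /double_fan_chord abij hab !orbT.
Qed.

Lemma not_blocker_setD1 (B T : {set edge}) e :
  triangulation T -> {in T, forall g, g \in B -> g = e} -> ~~ blocker (B :\ e).
Proof.
move=> Ttr TB; apply/negP => /andP [_ /forallP /(_ T)]; rewrite Ttr /=.
by case/set0Pn => g; rewrite !inE => /andP [/andP [ge gB] gT]; rewrite (TB g gT gB) eqxx in ge.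
Qed.

Definition arc (x y : nat) : {set 'I_n} := [set i : 'I_n | x <= i < y].

Lemma card_arc x y : y <= n -> #|arc x y| = y - x.
Proof.
elim: y => [|y IH] yn.
  by apply/eqP; rewrite cards_eq0; apply/eqP/setP => i; rewrite !inE; lia.
have [xy|yx] := leqP x y; last first.
  rewrite (_ : arc x y.+1 = set0) ?cards0; first by lia.
  by apply/setP => i; rewrite !inE; lia.
rewrite (_ : arc x y.+1 = Ordinal yn |: arc x y) ?cardsU1 ?IH; try lia.
  by rewrite !inE /=; lia.
by apply/setP => i; rewrite !inE -val_eqE /=; lia.
Qed.

Section ArcBlocker.
Variables (d a s c : nat) (eps : bool).
Hypotheses (n_split : n = d + a + s + c) (d_pos : 0 < d).
Hypotheses (a_gt1 : 1 < a) (s_gt1 : 1 < s) (c_gt1 : 1 < c).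
Local Notation al := (d + a).
Local Notation ga := (d + a + s).

Definition arc_blocker : {set edge} :=
  let base := setX (arc d al) (arc ga n) :|: setX (arc 0 d) (arc al ga) in
  if eps then base :\: setX (arc d d.+1) (arc n.-1 n)
              :|: setX (arc d d.+1) (arc al.+1 ga) :|: setX (arc al al.+1) (arc n.-1 n)
  else base.

Definition arc_blocker_pair (x y : nat) : bool :=
  [|| (d <= x < al) && (ga <= y) && ~~ [&& eps, x == d & y == n.-1],
      (x < d) && (al <= y < ga),
      [&& eps, x == d & al < y < ga] |
      [&& eps, x == al & y == n.-1]].

Lemma in_arc_blocker (g : edge) : (g \in arc_blocker) = arc_blocker_pair g.1 g.2.
Proof.
case: g => x y; have := ltn_ord y.
by rewrite /arc_blocker /arc_blocker_pair; case: eps; rewrite !inE /=; lia.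
Qed.

Lemma card_arc_blocker : #|arc_blocker| = a * c + d * s + eps * s.-1.
Proof.
have cardsU_disjoint (A B : {set edge}) : [disjoint A & B] -> #|A :|: B| = #|A| + #|B|.
  by move=> AB; apply/eqP; rewrite (leq_card_setU A B).2.
have disj (A B : {set edge}) :
    (forall x y, (x, y) \in A -> (x, y) \in B -> False) -> [disjoint A & B].
  by move=> AB; apply/pred0P => -[x y] /=; apply/negP => /andP [/AB].
rewrite /arc_blocker; case: eps.
  rewrite !cardsU_disjoint ?cardsDS ?cardsU_disjoint ?cardsX ?card_arc; try lia;
    try (apply: disj => x y; rewrite !inE /=; lia).
  by apply/subsetP => -[x y]; rewrite !inE /=; lia.
rewrite cardsU_disjoint ?cardsX ?card_arc; try lia.
by apply: disj => x y; rewrite !inE /=; lia.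
Qed.

Lemma arc_blocker_pair_diagonal (x y : 'I_n) : arc_blocker_pair x y -> is_diagonal (x, y).
Proof. by rewrite is_diagonalE /arc_blocker_pair /=; have := ltn_ord y; lia. Qed.

Lemma arc_blocker_meets (T : {set edge}) : triangulation T -> arc_blocker :&: T != set0.
Proof.
move=> Ttr; suff [x [y [xyB /orP [xy_side|xyT]]]] :
    exists x y : 'I_n, arc_blocker_pair x y /\ polygon_edge T x y.
- by move: (arc_blocker_pair_diagonal xyB); rewrite /is_diagonal xy_side andbF.
- by apply/set0Pn; exists (x, y); rewrite inE in_arc_blocker xyB.
have [i [k [j [/andP [id dk] /andP [kg gj] ikT kjT]]]] :=
  triangulation_triangle_across Ttr (ltac:(lia) : 0 < d < ga) (ltac:(lia) : ga < n).
have [k_al|al_k] := ltnP k al; last by exists i, k; split=> //; rewrite /arc_blocker_pair; lia.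
have [corner|] := boolP [&& eps, k == d :> nat & j == n.-1 :> nat]; last first.
  by exists k, j; split=> //; rewrite /arc_blocker_pair; lia.
have [_ /eqP kd /eqP jn] := and3P corner.
have [m [/andP [km mj] kmT mjT]] := triangulation_apex Ttr (ltac:(lia) : k.+1 < j) kjT.
have [m_al|al_m] := leqP m al; [exists m, j | exists k, m];
  by split=> //; move: corner; rewrite /arc_blocker_pair; lia.
Qed.

Lemma double_fan_not_blocker (x y : 'I_n) i j h1 h2 :
  i.+1 < j < n -> ~~ ((i == 0) && (j == n.-1)) -> i < h1 < j -> (h2 < i) || (j < h2) ->
  h2 < n ->
  (forall u v, u.+1 < v < n -> double_fan_chord i j h1 h2 u v -> arc_blocker_pair u v ->
     (u == x) && (v == y)) ->
  ~~ blocker (arc_blocker :\ (x, y)).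
Proof.
move=> ijn ij0 h1ij h2ij h2n only_xy.
apply: not_blocker_setD1 (double_fan_triangulation ijn ij0 h1ij h2ij h2n) _.
move=> [u v]; rewrite inE in_arc_blocker is_diagonalE /= => /andP [/andP [uv _] uvF] uvB.
have uvn : u.+1 < v < n by rewrite uv ltn_ord.
by have /andP [/eqP/val_inj -> /eqP/val_inj ->] := only_xy u v uvn uvF uvB.
Qed.

Lemma arc_blocker_saturated e : e \in arc_blocker -> ~~ blocker (arc_blocker :\ e).
Proof.
case: e => x y; rewrite in_arc_blocker /=; have := ltn_ord y.
rewrite /arc_blocker_pair => yn /or4P [AC|DS|eps_d|eps_al].
- have [yn1|yn1] := eqVneq (y : nat) n.-1.
    (* the centre al would give the chord {al, n-1}, which is in the set when eps *)
    apply: (double_fan_not_blocker (i := x) (j := y) (h1 := al.+1) (h2 := 0)); try lia.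
    by move=> u v; rewrite /double_fan_chord /chord_inside /chord_outside /arc_blocker_pair; lia.
  apply: (double_fan_not_blocker (i := x) (j := y) (h1 := al) (h2 := 0)); try lia.
  by move=> u v; rewrite /double_fan_chord /chord_inside /chord_outside /arc_blocker_pair; lia.
- apply: (double_fan_not_blocker (i := x) (j := y) (h1 := al.-1) (h2 := ga)); try lia.
  by move=> u v; rewrite /double_fan_chord /chord_inside /chord_outside /arc_blocker_pair; lia.
- apply: (double_fan_not_blocker (i := d) (j := n.-1) (h1 := y) (h2 := 0)); try lia.
  by move=> u v; rewrite /double_fan_chord /chord_inside /chord_outside /arc_blocker_pair; lia.
- apply: (double_fan_not_blocker (i := d) (j := n.-1) (h1 := al) (h2 := 0)); try lia.
  by move=> u v; rewrite /double_fan_chord /chord_inside /chord_outside /arc_blocker_pair; lia.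
Qed.

Lemma arc_blocker_nt : nt_blocker (a * c + d * s + eps * s.-1) arc_blocker.
Proof.
rewrite /nt_blocker /saturated_blocker card_arc_blocker eqxx andbT.
have -> : blocker arc_blocker.
  apply/andP; split.
    by apply/subsetP => -[x y]; rewrite in_arc_blocker inE; apply: arc_blocker_pair_diagonal.
  by apply/forallP => T; apply/implyP; apply: arc_blocker_meets.
by apply/forall_inP => e; apply: arc_blocker_saturated.
Qed.

End ArcBlocker.

End Polygon.

Lemma arc_sizes_cover_window n t :
  21 <= n -> n ^ 2 + 2 * n <= 8 * t + 11 -> 8 * t + 16 <= n ^ 2 + 4 * n ->
  exists d a s c (eps : bool),
    [/\ n = d + a + s + c, 0 < d, 1 < a, 1 < s & 1 < c] /\ t = a * c + d * s + eps * s.-1.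
Proof.
rewrite (divn_eq n 4) => n21 lo hi.
have r4 : n %% 4 < 4 by rewrite ltn_mod.
move: (n %/ 4) (n %% 4) r4 n21 lo hi => m r r4 n21 lo hi.
have {lo hi} [Kt tK] : m * (2 * m + r) < t /\
    (t + 3 <= m * (2 * m + r) + 2 * m + r \/ r = 0 /\ t = m * (2 * m + r) + 2 * m - 2).
  by case: r r4 n21 lo hi => [|[|[|[|r]]]] //= r4 n21 lo hi; nia.
case: tK => [tK | [r0 tE]].
  (* with s = m and c = m + 1 the size is a + m (2m + r) - 1, which fixes a *)
  exists (m * (2 * m + r) + 2 * m + r - 2 - t), (t + 1 - m * (2 * m + r)), m, m.+1, true.
  split; [split|]; nia.
exists 1, m, (m - 2), (2 * m + 1), false.
split; [split|]; nia.
Qed.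

Theorem lemma3p5 (n t : nat) :
  21 <= n ->
  n ^ 2 + 2 * n <= 8 * t + 11 ->
  8 * t + 16 <= n ^ 2 + 4 * n ->
  exists B : {set 'I_n * 'I_n}, nt_blocker t B.
Proof.
move=> n21 lo hi.
have [d [a [s [c [eps [[n_split d_pos a_gt1 s_gt1 c_gt1] ->]]]]]] :=
  arc_sizes_cover_window n21 lo hi.
by exists (arc_blocker n d a s eps); apply: arc_blocker_nt.
Qed.
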